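(* Let $k\ge 1$ and $r\ge 0$ be integers and let $G=(V,E)$ be a $(k+r)$-regular graph. A set $S\subseteq V$ is a $k$-conversion set of $G$ if and only if $G[V-S]$ is $r$-degenerate.
   Context: For a graph $G=(V,E)$, a positive integer $k$ and a set $S_0\subseteq V$, the irreversible $k$-threshold conversion process is defined by: for $t=1,2,\dots$, $S_t$ is obtained from $S_{t-1}$ by adjoining all vertices having at least $k$ neighbours in $S_{t-1}$. The set $S_0$ is a $k$-conversion set of $G$ if $S_t=V$ for some $t\ge 0$. A graph is $r$-degenerate if every (nonempty) induced subgraph of it has a vertex of degree at most $r$. *)

From mathcomp Require Import all_boot.
Set Implicit Arguments.
Unset Strict Implicit.
Unset Printing Implicit Defensive.

Definition simple_graph (T : finType) (e : rel T) : Prop :=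
  symmetric e /\ irreflexive e.

Definition nbhd (T : finType) (e : rel T) (x : T) : {set T} := [set y | e x y].

Definition regular (T : finType) (e : rel T) (d : nat) : Prop :=
  forall x : T, #|nbhd e x| = d.

Definition conv_step (T : finType) (e : rel T) (k : nat) (S : {set T}) : {set T} :=
  S :|: [set x | k <= #|nbhd e x :&: S|].

Definition conv_iter (T : finType) (e : rel T) (k : nat) (S0 : {set T}) (t : nat) : {set T} :=
  iter t (conv_step e k) S0.

Definition conversion_set (T : finType) (e : rel T) (k : nat) (S0 : {set T}) : Prop :=
  exists t : nat, conv_iter e k S0 t = [set: T].

Definition degenerate_induced (T : finType) (e : rel T) (W : {set T}) (r : nat) : Prop :=
  forall A : {set T}, A \subset W -> A != set0 ->
    exists2 x, x \in A & #|nbhd e x :&: A| <= r.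

From mathcomp Require Import all_boot.
From mathcomp Require Import zify.

(* In a (k + r)-regular graph a vertex has at least k neighbours in a set B
   exactly when it has at most r neighbours outside B.  Hence the first vertex
   of a set A outside S to be converted has at most r neighbours in A, and
   conversely, while the process is not finished, a vertex outside the current
   set with at most r neighbours there is converted at the next step.  Since
   the process only grows, it reaches a fixed point, which must be V. *)

Lemma iter_extensive_fixed (T : finType) (f : {set T} -> {set T}) :
  (forall A : {set T}, A \subset f A) ->
  forall X, exists t, f (iter t f X) = iter t f X.
Proof.
move=> f_ext X; have [n] := ubnP #|~: X|; elim: n X => // n IHn X.
rewrite ltnS => leXn.
have [fX_eq|fX_neq] := eqVneq (f X) X; first by exists 0.
have ltfX : #|~: f X| < #|~: X|.
  by apply: proper_card; rewrite properC properEneq eq_sym fX_neq f_ext.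
have [t ft_fixed] := IHn (f X) (leq_trans ltfX leXn).
by exists t.+1; rewrite iterSr.
Qed.

Section Conversion.

Variables (T : finType) (e : rel T) (k r : nat).
Hypothesis e_reg : regular e (k + r).

Lemma threshold_complement (x : T) (B : {set T}) :
  (k <= #|nbhd e x :&: B|) = (#|nbhd e x :&: ~: B| <= r).
Proof. by have := cardsID B (nbhd e x); rewrite setDE e_reg; lia. Qed.

Lemma subset_conv_iter (S : {set T}) (t : nat) : S \subset conv_iter e k S t.
Proof.
elim: t => //= t IHt; exact: subset_trans IHt (subsetUl _ _).
Qed.

Lemma conv_step_low_degree (A B : {set T}) :
  [disjoint A & B] -> ~~ [disjoint A & conv_step e k B] ->
  exists2 x, x \in A & #|nbhd e x :&: A| <= r.
Proof.
move=> disjAB; rewrite -setI_eq0 => /set0Pn[x].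
rewrite /conv_step !inE => /andP[xA /orP[xB|]].
  by rewrite (disjointFr disjAB xA) in xB.
rewrite threshold_complement => few_out; exists x => //.
apply: leq_trans few_out; apply/subset_leq_card/setIS.
by rewrite -disjoints_subset.
Qed.

Lemma conv_step_fixed_full (S B : {set T}) :
  degenerate_induced e (~: S) r -> S \subset B -> conv_step e k B = B ->
  B = [set: T].
Proof.
move=> degS SB B_fixed; apply/setP => y; rewrite inE; apply/negPn/negP => yNB.
have NB_nonempty : ~: B != set0 by apply/set0Pn; exists y; rewrite inE.
have NB_sub : ~: B \subset ~: S by rewrite setCS.
have [x xNB] := degS (~: B) NB_sub NB_nonempty.
rewrite -threshold_complement => many_in.
suff : x \in conv_step e k B by rewrite B_fixed; apply/negP; rewrite -in_setC.
by rewrite !inE many_in orbT.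
Qed.

Lemma conversion_degenerate (S : {set T}) :
  conversion_set e k S -> degenerate_induced e (~: S) r.
Proof.
move=> [t St_full] A sAS /set0Pn[a aA].
have : ~~ [disjoint A & conv_iter e k S t].
  by apply/negP => /disjointFr/(_ aA); rewrite St_full inE.
elim: t {St_full} => [|t IHt].
  by rewrite /= disjoints_subset sAS.
have [disjt|/IHt//] := boolP [disjoint A & conv_iter e k S t].
exact: conv_step_low_degree disjt.
Qed.

Lemma degenerate_conversion (S : {set T}) :
  degenerate_induced e (~: S) r -> conversion_set e k S.
Proof.
move=> degS.
have [t St_fixed] :=
  @iter_extensive_fixed _ (conv_step e k) (fun _ => subsetUl _ _) S.
by exists t; apply: conv_step_fixed_full degS (subset_conv_iter S t) St_fixed.
Qed.

End Conversion.

Theorem proposition4p1 (T : finType) (e : rel T) (k r : nat) :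
  simple_graph e -> 1 <= k -> regular e (k + r) ->
  forall S : {set T}, conversion_set e k S <-> degenerate_induced e (~: S) r.
Proof.
move=> _ _ e_reg S; split; [exact: conversion_degenerate | exact: degenerate_conversion].
Qed.
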